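(* Let $1\le k\le n-1$, $d=n-1$, $h=1$, $\alpha=M/k$, and $\beta=\alpha'=\frac{M}{k(d-k+2)}$ (assumed a positive integer). Then, for a sufficiently large finite field $\mathrm{GF}(q)$, there exist linear codes for the system $\mathrm{DSS}(n,k,d,1,\alpha,\alpha',\beta,M)$ (linear storage codes on the complete nodes and on the repairing node, and linear repair combinations) such that, when a complete node fails and each of the $d$ surviving complete nodes and the repairing node transmits $\beta$ packets to the new node, the reconstruction property is preserved: any $k$ complete nodes of the resulting system can recover the file.
   Context: $\mathrm{DSS}(n,k,d,h,\alpha,\alpha',\beta,M)$: a file of $M$ packets over $\mathrm{GF}(q)$ is stored on $n$ complete storage nodes of capacity $\alpha$ each (each node stores $\alpha$ linear combinations of the file packets) so that any $k$ of them reconstruct the file (reconstruction property); in addition there are $h$ repairing storage nodes of capacity $\alpha'<\alpha$, which are never contacted by data collectors. When a complete node fails, a new node is created from $\beta$ packets (linear combinations of stored data) received from each of $d$ surviving complete nodes and from each of the $h$ repairing nodes; repair is functional (the new node need not equal the failed one). *)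

From HB Require Import structures.
From mathcomp Require Import all_boot all_order all_algebra all_field.
Set Implicit Arguments. Unset Strict Implicit. Unset Printing Implicit Defensive.
Import GRing.Theory.
Local Open Scope ring_scope.

(* A node storing a packets is represented by an a x M matrix over F whose rows
   are the coding vectors (coefficients w.r.t. the M file packets) of the
   stored linear combinations. *)

Definition reconstructs (F : fieldType) (n k alpha M : nat)
    (C : 'I_n -> 'M[F]_(alpha, M)) : Prop :=
  forall S : {set 'I_n}, #|S| = k ->
    (1%:M <= \sum_(j in S) <<C j>>)%MS.

(* Contents of the new node created when complete node i fails, built from the
   helper set D of surviving complete nodes and all h repairing nodes R:
   helper j sends beta packets B j *m C j, repairing node l sends Br l *m R l,
   and the new node stores linear combinations of the received packets. *)
Definition new_node (F : fieldType) (n h alpha alpha' beta M : nat)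
    (C : 'I_n -> 'M[F]_(alpha, M)) (R : 'I_h -> 'M[F]_(alpha', M))
    (D : {set 'I_n})
    (B : 'I_n -> 'M[F]_(beta, alpha)) (A : 'I_n -> 'M[F]_(alpha, beta))
    (Br : 'I_h -> 'M[F]_(beta, alpha')) (Ar : 'I_h -> 'M[F]_(alpha, beta))
    : 'M[F]_(alpha, M) :=
  \sum_(j in D) A j *m (B j *m C j) + \sum_(l < h) Ar l *m (Br l *m R l).

Definition replace_node (F : fieldType) (n alpha M : nat)
    (C : 'I_n -> 'M[F]_(alpha, M)) (i : 'I_n) (N : 'M[F]_(alpha, M))
    : 'I_n -> 'M[F]_(alpha, M) :=
  fun j => if j == i then N else C j.

From HB Require Import structures.
From mathcomp Require Import all_boot all_order all_algebra all_field.
From mathcomp Require Import mxabelem zify.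
Set Implicit Arguments. Unset Strict Implicit. Unset Printing Implicit Defensive.
Import GRing.Theory.
Local Open Scope ring_scope.

(* The configuration (C, R0) of complete nodes and repairing node is kept
   "generic": any y complete nodes span a space of dimension at least
   min(M, y alpha), and at least min(M, beta + y alpha) together with R0.
   For y = k this is the reconstruction property since M = k alpha.
   Genericity is produced by a counting argument: over a field with more
   elements than the finitely many subspaces W to be taken care of, some
   block Y satisfies rank(W + Y X) >= min(rank W + r, rank(W + X)) for all
   of them at once.  A repair chooses the helpers' blocks B_j, then the new
   node inside the span of their packets and of R0, both generically; the
   identity alpha = (n - k + 1) beta is exactly what makes the n - y helpers
   outside a set of y < k nodes contribute one node's worth of dimensions. *)

Section GenericChoice.

Variable F : finFieldType.

Lemma card_row_submx p w m (X : 'M[F]_(p, m)) (W : 'M[F]_(w, m)) :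
  ~~ (X <= W)%MS -> (#|[set x : 'rV_p | (x *m X <= W)%MS]| * #|F| <= #|F| ^ p)%N.
Proof.
move=> notXW.
have -> : [set x : 'rV_p | (x *m X <= W)%MS] = rowg (kermx (X *m cokermx W)).
  by apply/setP => x; rewrite inE mem_rowg sub_kermx mulmxA submxE.
have rX_gt0 : (0 < \rank (X *m cokermx W))%N.
  by rewrite lt0n mxrank_eq0 -submxE.
have := rank_leq_row (X *m cokermx W); have := finNzRing_gt1 F.
rewrite card_rowg mxrank_ker -expnSr => F_gt1 rX_le.
by apply: leq_pexp2l; [exact: ltnW | lia].
Qed.

Lemma exists_row_mulmx_nsubmx (L : finType) p w m (X : 'M[F]_(p, m))
    (W : L -> 'M[F]_(w, m)) :
  (#|L| < #|F|)%N ->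
  exists x : 'rV_p, forall l, ~~ (X <= W l)%MS -> ~~ (x *m X <= W l)%MS.
Proof.
move=> L_lt_F; pose bad l := [set x : 'rV_p | (x *m X <= W l)%MS].
pose U := \bigcup_(l | ~~ (X <= W l)%MS) bad l.
have card_U : (#|U| * #|F| <= #|L| * #|F| ^ p)%N.
  apply: (@leq_trans (\sum_(l | ~~ (X <= W l)%MS) #|bad l| * #|F|)).
    rewrite -big_distrl leq_mul2r /U; apply/orP; right.
    elim/big_rec2: _ => [|l s A _ IH]; first by rewrite cards0.
    by rewrite (leq_trans (leq_card_setU _ _)) ?leq_add2l.
  apply: (@leq_trans (\sum_(l : L) #|F| ^ p)); last by rewrite sum_nat_const.
  rewrite big_mkcond; apply: leq_sum => l _; case: ifP => // notXW.
  exact: card_row_submx.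
have : (0 < #|~: U|)%N.
  rewrite cardsCs setCK card_mx mul1n subn_gt0.
  have F_gt0 := ltnW (finNzRing_gt1 F).
  rewrite -(ltn_pmul2r F_gt0) (leq_ltn_trans card_U) // mulnC ltn_pmul2l //.
  by rewrite expn_gt0 F_gt0.
case/card_gt0P => x; rewrite inE => xU; exists x => l notXW.
by apply: contra xU => xXW; apply/bigcupP; exists l; rewrite ?inE.
Qed.

Lemma exists_mulmx_rank_generic (L : finType) r p w m (X : 'M[F]_(p, m))
    (W : L -> 'M[F]_(w, m)) :
  (#|L| < #|F|)%N ->
  exists Y : 'M_(r, p), forall l,
    (minn (\rank (W l) + r) (\rank (W l + X)) <= \rank (W l + Y *m X))%N.
Proof.
move=> L_lt_F; elim: r => [|r [Y IHY]].
  by exists 0 => l; rewrite addn0 geq_min mxrankS ?addsmxSl.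
pose W' l := (W l + Y *m X)%MS.
have [x Hx] := exists_row_mulmx_nsubmx X W' L_lt_F.
exists (col_mx x Y : 'M_(1 + r, p)) => l.
have -> : \rank (W l + col_mx x Y *m X) = \rank (W' l + x *m X).
  apply/eqmx_rank; rewrite mul_col_mx /W' -addsmxA (addsmxC (Y *m X)).
  by apply/eqmxP; apply: adds_eqmx => //; apply: eqmx_sym; apply: addsmxE.
have [XW'|notXW'] := boolP (X <= W' l)%MS.
  rewrite geq_min; apply/orP; right; apply: mxrankS.
  by rewrite (submx_trans _ (addsmxSl _ _)) // addsmx_sub addsmxSl.
have ltW' : (\rank (W' l) < \rank (W' l + x *m X))%N.
  apply: rank_ltmx.
  by rewrite ltmxE addsmxSl addsmx_sub submx_refl (negPf (Hx l notXW')).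
have := IHY l; rewrite -/(W' l); lia.
Qed.

Lemma exists_blocks_rank_generic (I L : finType) r p w m (X : I -> 'M[F]_(p, m))
    (W : L -> 'M[F]_(w, m)) (P : L -> pred I) (cap : L -> nat) :
  (#|L| < #|F|)%N ->
  (forall l j (V : 'M[F]_m), P l j -> (W l <= V)%MS -> (cap l <= \rank (V + X j))%N) ->
  exists Y : I -> 'M_(r, p), forall l,
    (minn (\rank (W l) + r * #|P l|) (cap l)
       <= \rank (W l + \sum_(j | P l j) <<Y j *m X j>>))%N.
Proof.
move=> L_lt_F capP.
suff /(_ (index_enum I) (index_enum_uniq I))[Y HY] :
    forall s : seq I, uniq s -> exists Y : I -> 'M_(r, p), forall l,
    (minn (\rank (W l) + r * count (P l) s) (cap l)
       <= \rank (W l + \sum_(j <- s | P l j) <<Y j *m X j>>))%N.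
  by exists Y => l; rewrite -sum1_card sum1_count; apply: HY.
elim=> [|j s IHs] /=.
  by exists (fun=> 0) => l; rewrite big_nil (addsmx0 _ (W l)).1 muln0 addn0 geq_minl.
case/andP=> j_notin_s /IHs[Y IHY].
pose T l := (\sum_(i <- s | P l i) <<Y i *m X i>>)%MS.
have [Z HZ] := exists_mulmx_rank_generic r (X j) (fun l => W l + T l)%MS L_lt_F.
exists (fun i => if i == j then Z else Y i) => l.
rewrite big_cons (eqxx j).
have -> : (\sum_(i <- s | P l i) <<(if i == j then Z else Y i) *m X i>>)%MS = T l.
  rewrite /T [LHS]big_seq_cond [RHS]big_seq_cond.
  apply: eq_bigr => i /andP[i_in_s _].
  by case: eqP i_in_s => // ->; rewrite (negPf j_notin_s).
have [Plj|_] := boolP (P l j); last by rewrite add0n.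
have -> : \rank (W l + (<<Z *m X j>> + T l)) = \rank (W l + T l + Z *m X j).
  rewrite (addsmxC <<_>>%MS) addsmxA.
  exact: (adds_eqmx (eqmx_refl _) (genmxE _)).1.
have := HZ l; have := IHY l; have := capP l j _ Plj (addsmxSl (W l) (T l)).
rewrite -/(T l) add1n mulnS; lia.
Qed.

End GenericChoice.

Definition span_nodes (F : fieldType) n a M (C : 'I_n -> 'M[F]_(a, M))
    (Y : {set 'I_n}) : 'M[F]_M :=
  (\sum_(j in Y) <<C j>>)%MS.

Definition rank_bounds (F : fieldType) n a b M (C : 'I_n -> 'M[F]_(a, M))
    (R0 : 'M[F]_(b, M)) : Prop :=
  forall Y : {set 'I_n},
    (minn M (#|Y| * a) <= \rank (span_nodes C Y))%N /\
    (minn M (b + #|Y| * a) <= \rank (R0 + span_nodes C Y))%N.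

Section Nodes.

Variables (F : fieldType) (n a M : nat).
Implicit Types (C : 'I_n -> 'M[F]_(a, M)) (Y : {set 'I_n}).

Lemma span_nodesU1 C Y j :
  j \notin Y -> span_nodes C (j |: Y) = (<<C j>> + span_nodes C Y)%MS.
Proof. by move=> jY; rewrite /span_nodes big_setU1. Qed.

Lemma span_nodes_replace_notin C i N Y :
  i \notin Y -> span_nodes (replace_node C i N) Y = span_nodes C Y.
Proof.
move=> iY; apply: eq_bigr => j jY; rewrite /replace_node.
by case: eqP jY => // ->; rewrite (negPf iY).
Qed.

Lemma span_nodes_replace_in C i N Y :
  i \in Y -> span_nodes (replace_node C i N) Y = (<<N>> + span_nodes C (Y :\ i))%MS.
Proof.
move=> iY; rewrite -{1}(setD1K iY) span_nodesU1 ?setD11 //.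
by rewrite span_nodes_replace_notin ?setD11 // /replace_node eqxx.
Qed.

Lemma rank_bounds_reconstructs k b C (R0 : 'M[F]_(b, M)) :
  M = (k * a)%N -> rank_bounds C R0 -> reconstructs k C.
Proof.
move=> M_ka bounds S cardS; rewrite sub1mx /row_full eqn_leq rank_leq_col /=.
by have [+ _] := bounds S; rewrite cardS -M_ka minnn.
Qed.

End Nodes.

Lemma mxrank_adds1mx (F : fieldType) m M (A : 'M[F]_(m, M)) : \rank (A + 1%:M)%MS = M.
Proof.
apply/eqP; rewrite eqn_leq rank_leq_col /=.
by rewrite -{1}(mxrank1 F M) mxrankS // addsmxSr.
Qed.

Lemma exists_rank_bounds (F : finFieldType) n a b M :
  (b <= M)%N -> (#|{: bool * {set 'I_n}}| < #|F|)%N ->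
  exists (C : 'I_n -> 'M[F]_(a, M)) (R0 : 'M[F]_(b, M)), rank_bounds C R0.
Proof.
move=> b_le_M L_lt_F; pose R0 : 'M[F]_(b, M) := pid_mx b.
pose W (l : bool * {set 'I_n}) : 'M[F]_(b, M) := if l.1 then R0 else 0.
have [Y HY] := @exists_blocks_rank_generic _ _ _ a _ _ _ (fun=> 1%:M) W
  (fun l j => j \in l.2) (fun=> M) L_lt_F
  (fun l j V _ _ => eq_leq (esym (mxrank_adds1mx V))).
exists (fun j => Y j *m 1%:M), R0 => S; split.
  by have := HY (false, S); rewrite /W /= mxrank0 adds0mx_id minnC mulnC.
by have := HY (true, S); rewrite /W /= rank_pid_mx // minnC mulnC.
Qed.

Lemma exists_helper_blocks (F : finFieldType) n a b M (C : 'I_n -> 'M[F]_(a, M))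
    (R0 : 'M[F]_(b, M)) (D : {set 'I_n}) :
  (#|{set 'I_n}| < #|F|)%N -> rank_bounds C R0 ->
  exists B : 'I_n -> 'M[F]_(b, a), forall Y : {set 'I_n},
    (minn (minn M (b + #|Y| * a) + b * #|D :\: Y|) (minn M (b + #|Y|.+1 * a))
       <= \rank (R0 + span_nodes C Y + \sum_(j in D) <<B j *m C j>>))%N.
Proof.
move=> L_lt_F bounds.
pose W Y := (R0 + span_nodes C Y)%MS.
have capP Y j (V : 'M_M) : j \in D :\: Y -> (W Y <= V)%MS ->
    (minn M (b + #|Y|.+1 * a) <= \rank (V + C j))%N.
  rewrite inE => /andP[jY _] /submx_trans/(_ (addsmxSl V (C j))) WV.
  have [_] := bounds (j |: Y); rewrite cardsU1 jY add1n => /leq_trans; apply.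
  apply: mxrankS; move: WV; rewrite /W span_nodesU1 // !addsmx_sub genmxE.
  by rewrite addsmxSr => /andP[-> ->].
have [B HB] := @exists_blocks_rank_generic _ _ _ b _ _ _ C W
  (fun Y j => j \in D :\: Y) _ L_lt_F capP.
exists B => Y; have [_ bound] := bounds Y.
have sub_sums :
    (\sum_(j in (D :\: Y)%SET) <<B j *m C j>> <= \sum_(j in D) <<B j *m C j>>)%MS.
  by apply/sumsmx_subP => j /setDP[jD _]; apply: (sumsmx_sup j).
apply: leq_trans (leq_trans (HB Y) (mxrankS (addsmxS (submx_refl (W Y)) sub_sums))).
rewrite (eq_card (A := fun j => j \in D :\: Y) (B := D :\: Y)) //.
by rewrite leq_min geq_minr andbT (leq_trans (geq_minl _ _)) // leq_add2r.
Qed.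

Lemma repair_capacity n k a b y :
  a = ((n - k + 1) * b)%N -> (k <= n)%N -> (y < k)%N -> (a + b * y <= b * n)%N.
Proof.
by move=> -> k_le_n y_lt_k; rewrite mulnC -mulnDr leq_mul2l; apply/orP; right; lia.
Qed.

Lemma repair_rank_arith_nodes n k a b M y (rV rVU rVN : nat) :
  M = (k * a)%N -> a = ((n - k + 1) * b)%N -> (k <= n)%N ->
  (minn M (y * a) <= rV)%N ->
  (minn (minn M (b + y * a) + b * (n - y.+1)) (minn M (b + y.+1 * a)) <= rVU)%N ->
  (minn (rV + a) rVU <= rVN)%N -> (minn M (y.+1 * a) <= rVN)%N.
Proof.
move=> M_ka a_nb k_le_n; rewrite mulSn.
have [k_le_y|y_lt_k] := leqP k y.
  have : (M <= y * a)%N by rewrite M_ka leq_mul2r k_le_y orbT.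
  (* lia only succeeds once the nonlinear products are generalized. *)
  clear M_ka a_nb; move: (y * a)%N (b * _)%N => ya bc; lia.
have := repair_capacity a_nb k_le_n y_lt_k.
have : (b * (n - y.+1) + b * y.+1 = b * n)%N by rewrite -mulnDr subnK //; lia.
rewrite mulnS; clear M_ka a_nb.
by move: (y * a)%N (b * (n - y.+1))%N (b * y)%N => ya bc by'; lia.
Qed.

Lemma repair_rank_arith_helper n k a b M y (rR rRU rRN : nat) :
  M = (k * a)%N -> a = ((n - k + 1) * b)%N -> (k <= n)%N ->
  (minn M (b + y * a) <= rR)%N ->
  (minn (minn M (b + y * a) + b * (n - y.+1)) (minn M (b + y.+1 * a)) <= rRU)%N ->
  (minn (rR + a) rRU <= rRN)%N -> (minn M (y.+1 * a) <= rRN)%N ->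
  (minn M (b + y.+1 * a) <= rRN)%N.
Proof.
move=> M_ka a_nb k_le_n; rewrite mulSn.
have [k_le_y1|y1_lt_k] := leqP k y.+1.
  have : (M <= y.+1 * a)%N by rewrite M_ka leq_mul2r k_le_y1 orbT.
  rewrite mulSn; clear M_ka a_nb; move: (y * a)%N (b * _)%N => ya bc; lia.
have := repair_capacity a_nb k_le_n y1_lt_k.
have : (b * (n - y.+1) + b * y.+1 = b * n)%N by rewrite -mulnDr subnK //; lia.
rewrite mulnS; clear M_ka a_nb.
by move: (y * a)%N (b * (n - y.+1))%N (b * y)%N => ya bc by'; lia.
Qed.

Lemma rank_bounds_repair (F : finFieldType) n k a b M (C : 'I_n -> 'M[F]_(a, M))
    (R0 : 'M[F]_(b, M)) (i : 'I_n) (D : {set 'I_n}) :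
  M = (k * a)%N -> a = ((n - k + 1) * b)%N -> (k <= n)%N ->
  (#|{: bool * {set 'I_n}}| < #|F|)%N -> rank_bounds C R0 ->
  i \notin D -> #|D| = (n - 1)%N ->
  exists (B : 'I_n -> 'M[F]_(b, a)) (A : 'I_n -> 'M[F]_(a, b)) (Ar : 'M[F]_(a, b)),
    rank_bounds (replace_node C i (\sum_(j in D) A j *m (B j *m C j) + Ar *m R0)) R0.
Proof.
move=> M_ka a_nb k_le_n L_lt_F bounds iD cardD.
have D_eq : D = [set~ i].
  apply/eqP; rewrite eqEcard cardsC1 card_ord cardD subn1 leqnn andbT.
  by apply/subsetP => j; rewrite !inE; apply: contraTneq => ->.
have sets_lt_F : (#|{set 'I_n}| < #|F|)%N.
  by apply: leq_ltn_trans L_lt_F; rewrite card_prod card_bool leq_pmull.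
have [B HB] := exists_helper_blocks D sets_lt_F bounds.
set Sg := (\sum_(j in D) <<B j *m C j>>)%MS in HB *.
pose W (l : bool * {set 'I_n}) :=
  if l.1 then (R0 + span_nodes C l.2)%MS else span_nodes C l.2.
have [Z HZ] := exists_mulmx_rank_generic a (Sg + R0)%MS W L_lt_F.
have /sub_addsmxP[u NE] := submxMl Z (Sg + R0)%MS.
have /sub_sums_genmxP[A EA] := submxMl u.1 Sg.
exists B, A, u.2; rewrite -EA -NE; set N := Z *m _.
move=> Y; have [iY|iY] := boolP (i \in Y); last by rewrite !span_nodes_replace_notin.
rewrite span_nodes_replace_in //; set Y' := Y :\ i.
have cardY : #|Y| = #|Y'|.+1 by rewrite (cardsD1 i Y) iY.
have cardDY : #|D :\: Y'| = (n - #|Y'|.+1)%N.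
  have -> : D :\: Y' = ~: Y.
    rewrite D_eq; apply/setP => j; rewrite !inE.
    by case: (eqVneq j i) => [->|] /=; rewrite ?iY ?andbT.
  by rewrite cardsCs setCK card_ord cardY.
set V := span_nodes C Y'.
have [bV bR] := bounds Y'; have := HB Y'; rewrite cardDY -/V => bVR.
have HZV := HZ (false, Y'); have HZR := HZ (true, Y'); rewrite /W /= -/V in HZV HZR.
have rVU : (\rank (R0 + V + Sg) <= \rank (V + (Sg + R0)))%N.
  by rewrite (addsmxC Sg) addsmxA (addsmxC V R0).
have rRU : (\rank (R0 + V + Sg) <= \rank (R0 + V + (Sg + R0)))%N.
  by rewrite mxrankS // addsmxS ?addsmxSl.
have rNV : \rank (<<N>> + V) = \rank (V + N).
  by rewrite addsmxC; apply: (adds_eqmx (eqmx_refl _) (genmxE _)).1.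
have rRNV : \rank (R0 + (<<N>> + V)) = \rank (R0 + V + N).
  rewrite (addsmxC <<N>>%MS) addsmxA.
  exact: (adds_eqmx (eqmx_refl _) (genmxE _)).1.
have nodes := repair_rank_arith_nodes M_ka a_nb k_le_n bV (leq_trans bVR rVU) HZV.
rewrite cardY rNV rRNV; split=> //.
apply: repair_rank_arith_helper M_ka a_nb k_le_n bR (leq_trans bVR rRU) HZR _.
by apply: leq_trans nodes _; rewrite mxrankS // -addsmxA addsmxSr.
Qed.

Theorem proposition3 (n k d h M alpha alpha' beta : nat) :
  (1 <= k)%N -> (k <= n - 1)%N -> d = (n - 1)%N -> h = 1%N ->
  (0 < beta)%N -> M = (k * (d - k + 2) * beta)%N ->
  (alpha * k)%N = M -> alpha' = beta ->
  exists Q : nat, forall F : finFieldType, (Q <= #|F|)%N ->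
  exists Inv : ('I_n -> 'M[F]_(alpha, M)) -> ('I_h -> 'M[F]_(alpha', M)) -> Prop,
    (exists C R, Inv C R) /\
    (forall C R, Inv C R -> reconstructs k C) /\
    (forall C R, Inv C R ->
       forall (i : 'I_n) (D : {set 'I_n}), i \notin D -> #|D| = d ->
       exists (B : 'I_n -> 'M[F]_(beta, alpha)) (A : 'I_n -> 'M[F]_(alpha, beta))
              (Br : 'I_h -> 'M[F]_(beta, alpha')) (Ar : 'I_h -> 'M[F]_(alpha, beta)),
         Inv (replace_node C i (new_node C R D B A Br Ar)) R).
Proof.
move=> k_gt0 k_lt_n -> -> _ M_def alpha_k ->.
have alpha_def : alpha = ((n - k + 1) * beta)%N.
  have nk : (n - 1 - k + 2 = n - k + 1)%N by lia.
  by apply/eqP; rewrite -(eqn_pmul2r k_gt0) alpha_k M_def nk -mulnA mulnC.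
have M_ka : M = (k * alpha)%N by rewrite mulnC.
have k_le_n : (k <= n)%N by lia.
exists #|{: bool * {set 'I_n}}|.+1 => F L_lt_F.
exists (fun C R => rank_bounds C (R ord0)); split; [|split].
- have beta_le_M : (beta <= M)%N by rewrite M_ka alpha_def; nia.
  have [C [R0 bounds]] := exists_rank_bounds alpha beta_le_M L_lt_F.
  by exists C, (fun=> R0).
- by move=> C R; apply: rank_bounds_reconstructs M_ka.
- move=> C R bounds i D iD cardD.
  have [B [A [Ar repaired]]] :=
    rank_bounds_repair M_ka alpha_def k_le_n L_lt_F bounds iD cardD.
  exists B, A, (fun=> 1%:M), (fun=> Ar).
  by rewrite /new_node big_ord1 mul1mx.
Qed.
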